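(* Let $M$ be a $\mathfrak D$-module (not necessarily a weight module) on which the subalgebra $\mathfrak D^+$ acts locally finitely. Then: (i) $M$ contains a nonzero vector $v$ such that $\mathfrak D^+v\subseteq\mathbb Cv$; (ii) if $M$ is simple, then $M$ is a Whittaker module or a highest weight module.
   Context: $\mathfrak D$ is the Lie algebra with basis $\{d_m,h_r,\mathbf c_1,\mathbf c_2:m\in\mathbb Z,r\in\frac12+\mathbb Z\}$ and brackets $[d_m,d_n]=(m-n)d_{m+n}+\delta_{m+n,0}\frac{m^3-m}{12}\mathbf c_1$, $[d_m,h_r]=-rh_{m+r}$, $[h_r,h_s]=r\delta_{r+s,0}\mathbf c_2$, with $\mathbf c_1,\mathbf c_2$ central. $\mathfrak D^{\pm}=\bigoplus_{n\ge1}\mathbb Cd_{\pm n}\oplus\bigoplus_{r\in\frac12+\mathbb N}\mathbb Ch_{\pm r}$, $\mathfrak D^0=\mathbb Cd_0\oplus\mathbb C\mathbf c_1\oplus\mathbb C\mathbf c_2$. $\mathfrak D^+$ acts locally finitely on $M$ if every vector lies in a finite-dimensional $\mathfrak D^+$-submodule. A Whittaker module is a module generated by a nonzero vector $v$ with $xv=\varphi(x)v$ ($x\in\mathfrak D^+$) for some Lie algebra homomorphism $\varphi:\mathfrak D^+\to\mathbb C$; a highest weight module is a module generated by a nonzero vector $v$ with $\mathfrak D^+v=0$ and $\mathfrak D^0v\subseteq\mathbb Cv$. *)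

From HB Require Import structures.
From mathcomp Require Import all_boot all_order all_algebra.
From mathcomp Require Import complex.
From mathcomp Require Import reals.
Set Implicit Arguments. Unset Strict Implicit. Unset Printing Implicit Defensive.
Import Order.TTheory GRing.Theory Num.Theory.
Local Open Scope ring_scope.

(* Indexing conventions.
   d m      (m : int)  acts as d_m.
   h k      (k : int)  acts as h_{k + 1/2}  (so r = k + 1/2 ranges over 1/2 + Z).
   c1, c2              act as the central elements c_1, c_2.
   D^+ has basis d_n (n >= 1) and h_{k+1/2} (k >= 0), i.e. h_r, r in 1/2 + N.
   D^0 has basis d_0, c_1, c_2. *)

Section Dalg.
Variable R : realType.
Local Notation C := (R[i]).
Variable M : lmodType C.

Definition hidx (k : int) : C := k%:~R + 2^-1.

Definition is_Dmodule (d h : int -> M -> M) (c1 c2 : M -> M) : Prop :=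
  [/\ [/\ (forall m, linear (d m)), (forall k, linear (h k)), linear c1 & linear c2],
   (forall m n x, d m (d n x) - d n (d m x) =
        (m - n)%:~R *: d (m + n)%R x
        + (if (m + n == 0)%R then ((m ^+ 3 - m)%:~R / 12%:R) *: c1 x else 0)),
   (forall m k x, d m (h k x) - h k (d m x) = - hidx k *: h (m + k)%R x),
   (forall k l x, h k (h l x) - h l (h k x) =
        (if (k + l + 1 == 0)%R then hidx k *: c2 x else 0)) &
   [/\ (forall m x, c1 (d m x) = d m (c1 x)), (forall k x, c1 (h k x) = h k (c1 x)),
       (forall m x, c2 (d m x) = d m (c2 x)), (forall k x, c2 (h k x) = h k (c2 x))
     & (forall x, c1 (c2 x) = c2 (c1 x))]].

Definition span_seq (s : seq M) : M -> Prop :=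
  fun x => exists c : nat -> C, x = \sum_(i < size s) c i *: s`_i.

Definition Dplus_locally_finite (d h : int -> M -> M) : Prop :=
  forall v : M, exists s : seq M, span_seq s v /\
    (forall n : int, (1 <= n)%R -> forall x, span_seq s x -> span_seq s (d n x)) /\
    (forall k : int, (0 <= k)%R -> forall x, span_seq s x -> span_seq s (h k x)).

Definition is_Dsubmodule (d h : int -> M -> M) (c1 c2 : M -> M) (W : M -> Prop) : Prop :=
  [/\ W 0, (forall a x y, W x -> W y -> W (a *: x + y)),
      (forall m x, W x -> W (d m x)), (forall k x, W x -> W (h k x)) &
      (forall x, W x -> W (c1 x) /\ W (c2 x))].

Definition generated_by (d h : int -> M -> M) (c1 c2 : M -> M) (v : M) : Prop :=
  forall W, is_Dsubmodule d h c1 c2 W -> W v -> forall x, W x.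

Definition Dsimple (d h : int -> M -> M) (c1 c2 : M -> M) : Prop :=
  (exists x : M, x != 0) /\
  forall W, is_Dsubmodule d h c1 c2 W ->
    (forall x, W x -> x = 0) \/ (forall x, W x).

(* Lie algebra homomorphisms D^+ -> C, given by their values on the basis
   d_n (n >= 1), h_{k+1/2} (k >= 0): they must kill [D^+, D^+], which is spanned by
   [d_m,d_n] = (m-n) d_{m+n}, [d_m,h_r] = -r h_{m+r}, [h_r,h_s] = 0 (r,s > 0). *)
Definition Dplus_lie_hom (phid phih : int -> C) : Prop :=
  (forall m n : int, (1 <= m)%R -> (1 <= n)%R -> (m - n)%:~R * phid (m + n)%R = 0) /\
  (forall (m k : int), (1 <= m)%R -> (0 <= k)%R -> - hidx k * phih (m + k)%R = 0).

Definition is_Whittaker_module (d h : int -> M -> M) (c1 c2 : M -> M) : Prop :=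
  exists v : M, [/\ v != 0, generated_by d h c1 c2 v &
    exists phid phih : int -> C, [/\ Dplus_lie_hom phid phih,
      (forall n : int, (1 <= n)%R -> d n v = phid n *: v) &
      (forall k : int, (0 <= k)%R -> h k v = phih k *: v)]].

Definition is_highest_weight_module (d h : int -> M -> M) (c1 c2 : M -> M) : Prop :=
  exists v : M, [/\ v != 0, generated_by d h c1 c2 v,
    (forall n : int, (1 <= n)%R -> d n v = 0),
    (forall k : int, (0 <= k)%R -> h k v = 0) &
    [/\ exists a : C, d 0 v = a *: v, exists a : C, c1 v = a *: v &
        exists a : C, c2 v = a *: v]].

Definition Dplus_stable_line (d h : int -> M -> M) (v : M) : Prop :=
  (forall n : int, (1 <= n)%R -> exists a : C, d n v = a *: v) /\
  (forall k : int, (0 <= k)%R -> exists a : C, h k v = a *: v).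

End Dalg.

(* Let v be nonzero and V a finite-dimensional D^+-stable subspace containing
   it; modelling V by row vectors, D^+ acts on V by matrices. A linear
   dependence among d_1, ..., d_(n^2+1), where n = dim V, forces some d_j to
   act by 0 (bracketing with the top term shortens a dependence), hence d_m
   and h_r act by 0 for all large m, r. Giving d_m degree 2m and h_(k+1/2)
   degree 2k+1, the operators X_j satisfy [X_i, X_j] in C X_(i+j). Descending
   in the degree K: if the X_j with j > K act by scalars on a nonzero stable
   subspace S, then [X_K, X_i] acts on S by a scalar, which is zero since
   commutators are traceless; so X_K commutes with everything on S and an
   eigenspace of X_K in S is again stable. At K = 1 this yields the vector of
   (i). For (ii), the eigenvalues on such a vector vanish on [D^+, D^+], and
   the vector generates the simple module. *)

From HB Require Import structures.
From mathcomp Require Import all_boot all_order all_algebra.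
From mathcomp Require Import complex reals vector zify.
From Stdlib Require Import ClassicalEpsilon.
Set Implicit Arguments. Unset Strict Implicit. Unset Printing Implicit Defensive.
Import Order.TTheory GRing.Theory Num.Theory.
Local Open Scope ring_scope.

Section StableEigen.
Variables (C : numClosedFieldType) (n : nat).
Implicit Types (S A B : 'M[C]_n).

Lemma capmx_eigenspace_neq0 S A : S != 0 -> stablemx S A ->
  exists a, (S :&: eigenspace A a)%MS != 0.
Proof.
move=> S0 SA; have rS : (0 < \rank S)%N by rewrite lt0n mxrank_eq0.
have [a /eigenvalueP [w /eigenspaceP wa w0]] := eigenvalue_closed (restrictmx S A) rS.
exists a; apply/rowV0Pn; exists (w *m row_base S); last first.
  by rewrite mulmx_free_eq0 ?row_base_free.
rewrite sub_capmx -sub_eigenspace_conjmx ?stablemx_row_base ?row_base_free //.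
by rewrite wa (submx_trans (submxMl _ _)) ?eq_row_base.
Qed.

Lemma stablemx_capmx_eigenspace S A a B :
  stablemx S B -> S *m (A *m B - B *m A) = 0 ->
  stablemx (S :&: eigenspace A a)%MS B.
Proof.
move=> SB SAB; set E := (S :&: eigenspace A a)%MS.
have ES : (E <= S)%MS by exact: capmxSl.
have EA : E *m A = a *: E by apply/eigenspaceP/capmxSr.
have EAB : E *m A *m B = E *m B *m A.
  have /submxP [W ->] := ES; apply/eqP; rewrite -subr_eq0 -!mulmxA -!mulmxBr.
  by rewrite SAB mulmx0.
rewrite sub_capmx (submx_trans (submxMr _ ES)) //=.
by apply/eigenspaceP; rewrite -EAB EA scalemxAl.
Qed.

Lemma stablemx_commutator_scalar_eq0 (E A B : 'M[C]_n) mu :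
  E != 0 -> stablemx E A -> stablemx E B ->
  E *m (A *m B - B *m A) = mu *: E -> mu = 0.
Proof.
move=> E0 EA EB EAB; have rE : (0 < \rank E)%N by rewrite lt0n mxrank_eq0.
have baseAB : row_base E *m (A *m B - B *m A) = mu *: row_base E.
  have /submxP [W ->] : (row_base E <= E)%MS by rewrite eq_row_base.
  by rewrite -mulmxA EAB scalemxAr.
have : restrictmx E A *m restrictmx E B - restrictmx E B *m restrictmx E A = mu%:M.
  rewrite -!conjmxM ?inE ?stablemx_row_base //.
  rewrite -(conjmx_eigenvalue (V := row_base E) (f := A *m B - B *m A)) ?row_base_free //.
    by rewrite /conjmx mulmxBr mulmxBl.
  exact/eigenspaceP.
move/(congr1 mxtrace); rewrite mxtraceD raddfN /= mxtrace_mulC subrr mxtrace_scalar.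
by move/esym/eqP; rewrite mulrn_eq0 eqn0Ngt rE => /eqP.
Qed.
End StableEigen.

Section GradedFamily.
Variables (C : numClosedFieldType) (n : nat) (X : nat -> 'M[C]_n).
Hypothesis X_comm : forall i j, (0 < i)%N -> (0 < j)%N ->
  exists c, X i *m X j - X j *m X i = c *: X (i + j).
Variable N : nat.
Hypothesis X_vanish : forall j, (N <= j)%N -> X j = 0.

Definition family_stable (S : 'M[C]_n) := forall j, (0 < j)%N -> stablemx S (X j).

Definition scalar_from K (S : 'M[C]_n) :=
  forall j, (K <= j)%N -> exists a, (S <= eigenspace (X j) a)%MS.

Lemma scalar_from_step K S : (0 < K)%N ->
  S != 0 -> family_stable S -> scalar_from K.+1 S ->
  exists E, [/\ E != 0, family_stable E & scalar_from K E].
Proof.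
move=> K0 S0 SX SK.
have S_comm j : (0 < j)%N -> S *m (X K *m X j - X j *m X K) = 0.
  move=> j0; have [c XKj] := X_comm K0 j0.
  have [a /eigenspaceP Sa] := SK (K + j)%N ltac:(lia).
  have SKj : S *m (X K *m X j - X j *m X K) = (c * a) *: S.
    by rewrite XKj -scalemxAr Sa scalerA.
  by rewrite SKj (stablemx_commutator_scalar_eq0 S0 (SX K K0) (SX j j0) SKj) scale0r.
have [a Ea0] := capmx_eigenspace_neq0 S0 (SX K K0).
exists (S :&: eigenspace (X K) a)%MS; split => // [j j0|j Kj].
  exact: stablemx_capmx_eigenspace (SX j j0) (S_comm j j0).
have [->|KSj] := eqVneq j K; first by exists a; exact: capmxSr.
have [b Sb] := SK j ltac:(lia); exists b; exact: submx_trans (capmxSl _ _) Sb.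
Qed.

Lemma exists_scalar_from K : (0 < n)%N -> (0 < K)%N ->
  exists S, [/\ S != 0, family_stable S & scalar_from K S].
Proof.
move=> n0; move Et: (N - K)%N => t; elim: t K Et => [|t IH] K NK K0.
  exists 1%:M; split => [|j _|j Kj]; first by rewrite -mxrank_eq0 mxrank1 -lt0n.
    exact: submx1.
  by exists 0; apply/eigenspaceP; rewrite X_vanish ?mulmx0 ?scale0r //; lia.
have [S [S0 SX SK]] := IH K.+1 ltac:(lia) ltac:(lia).
exact: scalar_from_step K0 S0 SX SK.
Qed.

Theorem graded_common_eigenvector : (0 < n)%N ->
  exists2 v : 'rV[C]_n, v != 0 & forall j, (0 < j)%N -> exists a, v *m X j = a *: v.
Proof.
move=> n0; have [S [/rowV0Pn [v vS v0] _ S1]] := exists_scalar_from n0 (ltn0Sn 0).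
exists v => // j j0; have [a Sa] := S1 j j0.
by exists a; apply/eigenspaceP; exact: submx_trans vS Sa.
Qed.
End GradedFamily.

Lemma hidx_neq0 (R : realType) (k : int) : 0 <= k -> hidx R k != 0.
Proof.
move=> k0; apply/lt0r_neq0/ltr_wpDl; first by rewrite ler0z.
by rewrite invr_gt0 ltr0n.
Qed.

Section DplusMatrices.
Variables (R : realType) (n : nat) (D H : int -> 'M[R[i]]_n).
(* Matrices act on row vectors: [D l *m D m] represents d_m \o d_l. *)
Hypothesis DD : forall m l, 1 <= m -> 1 <= l ->
  D l *m D m - D m *m D l = (m - l)%:~R *: D (m + l).
Hypothesis DH : forall m k, 1 <= m -> 0 <= k ->
  H k *m D m - D m *m H k = - hidx R k *: H (m + k).
Hypothesis HH : forall k l, 0 <= k -> 0 <= l -> H l *m H k - H k *m H l = 0.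

Lemma D_dependence_shift N (p : int) (a : nat -> R[i]) : 1 <= p ->
  \sum_(i < N) a i *: D (p + i%:Z) = 0 ->
  (forall i, (i < N)%N -> a i = 0) \/ exists2 j, 1 <= j & D j = 0.
Proof.
elim: N p a => [|N IH] p a p1 sum0; first by left.
set q := p + N%:Z.
(* Bracketing with the top term D_q multiplies the i-th term by i - N. *)
have bracket : \sum_(i < N) (a i * (i%:Z - N%:Z)%:~R) *: D (p + q + i%:Z) = 0.
  have := congr1 (fun Y => D q *m Y - Y *m D q) sum0.
  rewrite /= mulmx0 mul0mx subrr mulmx_sumr mulmx_suml -sumrB big_ord_recr /=.
  rewrite -scalemxAr -scalemxAl -scalerBr DD ?subrr ?scale0r ?scaler0 ?addr0; try lia.
  move=> top; rewrite -[RHS]top; apply: eq_bigr => i _.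
  rewrite -scalemxAr -scalemxAl -scalerBr DD ?scalerA; try lia.
  by congr (_ * _%:~R *: D _); lia.
have [aN0|] := IH (p + q) (fun i => a i * (i%:Z - N%:Z)%:~R) ltac:(lia) bracket;
  last by right.
have a0 i : (i < N)%N -> a i = 0.
  move=> iN; have /eqP := aN0 i iN; rewrite mulf_eq0 intr_eq0 => /orP [/eqP //|].
  lia.
move: sum0; rewrite big_ord_recr big1 /= => [|i _]; last by rewrite a0 ?scale0r.
rewrite add0r => /eqP; rewrite scaler_eq0 => /orP [/eqP aN|/eqP Dq].
  by left => i; rewrite ltnS leq_eqVlt => /orP [/eqP ->|/a0].
by right; exists q => //; lia.
Qed.

Lemma exists_D_eq0 : exists2 j, 1 <= j & D j = 0.
Proof.
set T := [tuple D (1 + i%:Z) | i < (n * n).+1].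
have : ~~ free T.
  rewrite /free size_tuple neq_ltn; apply/orP; left.
  by rewrite ltnS (leq_trans (dimvS (subvf _))) ?dimvf.
move/freeP/not_all_ex_not => [k nk].
have [sumk /not_all_ex_not [i ki]] := imply_to_and _ _ nk.
have sum0 : \sum_(j < (n * n).+1) k (inord j) *: D (1 + j%:Z) = 0.
  by rewrite -[RHS]sumk; apply: eq_bigr => j _; rewrite inord_val nth_mktuple.
have [a0|//] := D_dependence_shift (a := fun j => k (inord j)) (lexx _) sum0.
by case: ki; rewrite -(inord_val i) a0.
Qed.

Lemma Dplus_eventually_zero : exists N : nat,
  forall j : int, N%:Z <= j -> D j = 0 /\ H j = 0.
Proof.
have [j j1 Dj] := exists_D_eq0.
have D0 m : 2 * j + 1 <= m -> D m = 0.
  move=> jm; have := DD (m := m - j) (l := j) ltac:(lia) j1.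
  rewrite Dj mul0mx mulmx0 subrr subrK => /esym/eqP.
  by rewrite scaler_eq0 intr_eq0 => /orP [/eqP|/eqP //]; lia.
exists (absz (2 * j + 1)) => k jk; split; first by apply: D0; lia.
have := DH (m := 2 * j + 1) (k := k - (2 * j + 1)) ltac:(lia) ltac:(lia).
rewrite D0 // mul0mx mulmx0 subrr [2 * j + 1 + _]addrC subrK => /esym/eqP.
by rewrite scaler_eq0 oppr_eq0 (negbTE (hidx_neq0 _ _)) /= => [/eqP //|]; lia.
Qed.

Definition Dplus_graded (j : nat) : 'M[R[i]]_n :=
  if odd j then H (j./2)%:Z else D (j./2)%:Z.

Lemma Dplus_graded_comm i j : (0 < i)%N -> (0 < j)%N ->
  exists c, Dplus_graded i *m Dplus_graded j - Dplus_graded j *m Dplus_graded i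
            = c *: Dplus_graded (i + j).
Proof.
move=> i0 j0; rewrite /Dplus_graded oddD halfD.
case Oi: (odd i); case Oj: (odd j) => /=.
- by exists 0; rewrite HH ?scale0r //; lia.
- exists (- hidx R (i./2)); rewrite DH; [congr (_ *: H _) | |]; lia.
- exists (hidx R (j./2)); rewrite -opprB DH ?scaleNr ?opprK; [congr (_ *: H _) | |]; lia.
- exists ((j./2)%:Z - (i./2)%:Z)%:~R; rewrite DD; [congr (_ *: D _) | |]; lia.
Qed.

Theorem Dplus_matrix_common_eigenvector : (0 < n)%N ->
  exists2 v : 'rV[R[i]]_n, v != 0 &
    (forall m, 1 <= m -> exists a, v *m D m = a *: v) /\
    (forall k, 0 <= k -> exists a, v *m H k = a *: v).
Proof.
move=> n0; have [N DH0] := Dplus_eventually_zero.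
have graded0 j : (N.*2 <= j)%N -> Dplus_graded j = 0.
  move=> Nj; rewrite /Dplus_graded; have /DH0 [-> ->] : N%:Z <= (j./2)%:Z by lia.
  by case: ifP.
have [v v0 vX] := graded_common_eigenvector Dplus_graded_comm graded0 n0.
exists v => //; split => [m m1|k k0].
  by have := vX `|m|.*2 ltac:(lia); rewrite /Dplus_graded odd_double doubleK gez0_abs //; lia.
by have := vX `|k|.*2.+1 isT; rewrite /Dplus_graded /= odd_double uphalf_double gez0_abs.
Qed.
End DplusMatrices.

Section SpanModel.
Variables (R : realType) (M : lmodType R[i]) (s : seq M).
Local Notation N := (size s).

Definition lincomb (c : 'rV[R[i]]_N) : M := \sum_(i < N) c 0 i *: s`_i.

Fact lincomb_is_linear : linear lincomb.
Proof.
move=> a c c'; rewrite /lincomb scaler_sumr -big_split /=.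
by apply: eq_bigr => i _; rewrite !mxE scalerDl scalerA.
Qed.

HB.instance Definition _ := GRing.isLinear.Build R[i] 'rV_N M *:%R lincomb lincomb_is_linear.

Lemma span_seq_lincomb y : span_seq s y <-> exists c, y = lincomb c.
Proof.
split=> [[c ->]|[c ->]].
  by exists (\row_(i < N) c i); apply: eq_bigr => i _; rewrite mxE.
exists (fun i => if insub i is Some j then c 0 j else 0).
by apply: eq_bigr => i _; rewrite valK.
Qed.

Lemma lincomb_addsmx m (Q : 'M_(m, N)) c :
  (forall w, (w <= Q)%MS -> lincomb w = 0) -> lincomb c = 0 ->
  forall w, (w <= Q + c)%MS -> lincomb w = 0.
Proof.
move=> kQ kc w /sub_addsmxP [u ->]; rewrite linearD /= kQ ?submxMl // add0r.
by rewrite [u.2]mx11_scalar mul_scalar_mx linearZ /= kc scaler0.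
Qed.

Lemma lincomb_kernel_from t (Q : 'M_N) : (N - \rank Q <= t)%N ->
  (forall c, (c <= Q)%MS -> lincomb c = 0) ->
  exists Q' : 'M_N, forall c, (c <= Q')%MS <-> lincomb c = 0.
Proof.
elim: t Q => [|t IH] Q rQ kQ.
  exists Q => c; split; [exact: kQ | move=> _; apply: submx_full].
  by rewrite /row_full eqn_leq rank_leq_col; move: rQ; rewrite leqn0 subn_eq0.
have [Qk|nQk] := classic (forall c, lincomb c = 0 -> (c <= Q)%MS).
  by exists Q => c; split; [exact: kQ | exact: Qk].
have [c ncQ] := not_all_ex_not _ _ nQk; have [kc cQ] := imply_to_and _ _ ncQ.
apply: (IH (Q + c)%MS); last exact: lincomb_addsmx.
have /mxrank_leqif_sup [le_rk eq_rk] := addsmxSl Q c.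
have : (\rank Q < \rank (Q + c)%MS)%N.
  by rewrite ltn_neqAle le_rk eq_rk andbT; apply/negP => /(submx_trans (addsmxSr Q c)).
by have := rank_leq_col (Q + c)%MS; lia.
Qed.

Lemma lincomb_kernel : exists Q : 'M_N, forall c, (c <= Q)%MS <-> lincomb c = 0.
Proof.
apply: (lincomb_kernel_from (t := N) (Q := 0)); first exact: leq_subr.
by move=> c; rewrite submx0 => /eqP ->; rewrite linear0.
Qed.

Lemma span_seq_model : exists r (psi : {linear 'rV[R[i]]_r -> M}),
  injective psi /\ forall y, span_seq s y <-> exists x, y = psi x.
Proof.
have [Q kerQ] := lincomb_kernel; set B := row_base (Q^C)%MS.
have BQC : (B <= Q^C)%MS by rewrite eq_row_base.
exists (\rank (Q^C)%MS), (lincomb \o mulmxr B : {linear _ -> _}); split.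
  apply: raddf_inj => x /= /kerQ xBQ.
  have : (x *m B <= Q :&: Q^C)%MS by rewrite sub_capmx xBQ (submx_trans (submxMl _ _)) ?BQC.
  by rewrite capmx_compl submx0 mulmx_free_eq0 ?row_base_free // => /eqP.
move=> y; rewrite span_seq_lincomb; split=> [[c ->]|[x ->]]; last by exists (x *m B).
have /sub_addsmxP [u ->] : (c <= Q + Q^C)%MS by rewrite submx_full ?addsmx_compl_full.
have /submxP [x ->] : (u.2 *m Q^C <= B)%MS by rewrite eq_row_base submxMl.
by exists x; rewrite linearD /= (proj1 (kerQ _)) ?submxMl // add0r.
Qed.
End SpanModel.

Section OperatorMatrices.
Variables (K : fieldType) (M : lmodType K) (r : nat) (psi : {linear 'rV[K]_r -> M}).
Hypothesis psi_inj : injective psi.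
Variable V : M -> Prop.
Hypothesis psi_onto : forall y, V y <-> exists x, y = psi x.

Lemma operator_matrix (f : M -> M) : linear f -> (forall y, V y -> V (f y)) ->
  exists A : 'M_r, forall x, psi (x *m A) = f (psi x).
Proof.
move=> lf Vf; pose fL : {linear M -> M} := HB.pack f (GRing.isLinear.Build _ _ _ _ f lf).
have /fin_all_exists [g fg] : forall i : 'I_r, exists y, f (psi (delta_mx 0 i)) = psi y.
  by move=> i; apply/psi_onto/Vf/psi_onto; exists (delta_mx 0 i).
exists (\matrix_i g i) => x; rewrite mulmx_sum_row {2}(row_sum_delta x).
rewrite !linear_sum [RHS](linear_sum fL); apply: eq_bigr => i _.
by rewrite !linearZ /= rowK -fg.
Qed.

Lemma operator_matrices (I : Type) (P : I -> Prop) (f : I -> M -> M) :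
  (forall i, P i -> linear (f i)) -> (forall i, P i -> forall y, V y -> V (f i y)) ->
  exists A : I -> 'M_r, forall i, P i -> forall x, psi (x *m A i) = f i (psi x).
Proof.
move=> lf Vf; apply: (choice (fun i A => P i -> forall x, psi (x *m A) = f i (psi x))) => i.
have [Pi|nPi] := classic (P i); last by exists 0.
by have [A fA] := operator_matrix (lf i Pi) (Vf i Pi); exists A.
Qed.

Lemma operator_matrix_inj (A B : 'M_r) :
  (forall x, psi (x *m A) = psi (x *m B)) -> A = B.
Proof. by move=> AB; apply/row_matrixP => i; rewrite !rowE; apply: psi_inj. Qed.

Lemma operator_matrix_commutator (A B : 'M_r) (f g : M -> M) :
  (forall x, psi (x *m A) = f (psi x)) -> (forall x, psi (x *m B) = g (psi x)) ->
  forall x, psi (x *m (A *m B - B *m A)) = g (f (psi x)) - f (g (psi x)).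
Proof. by move=> fA gB x; rewrite mulmxBr linearB /= !mulmxA fA gB gB fA. Qed.

Lemma operator_matrixZ (A : 'M_r) (f : M -> M) c :
  (forall x, psi (x *m A) = f (psi x)) -> forall x, psi (x *m (c *: A)) = c *: f (psi x).
Proof. by move=> fA x; rewrite -scalemxAr linearZ /= fA. Qed.
End OperatorMatrices.

Section DplusOperatorMatrices.
Variables (R : realType) (M : lmodType R[i]).
Variables (d h : int -> M -> M) (c1 c2 : M -> M).
Hypothesis HD : is_Dmodule d h c1 c2.
Variables (r : nat) (psi : {linear 'rV[R[i]]_r -> M}).
Hypothesis psi_inj : injective psi.
Variables (Dm Hm : int -> 'M[R[i]]_r).
Hypothesis Dm_d : forall m, 1 <= m -> forall x, psi (x *m Dm m) = d m (psi x).
Hypothesis Hm_h : forall k, 0 <= k -> forall x, psi (x *m Hm k) = h k (psi x).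

Lemma Dm_comm m l : 1 <= m -> 1 <= l ->
  Dm l *m Dm m - Dm m *m Dm l = (m - l)%:~R *: Dm (m + l).
Proof.
case: HD => _ dd _ _ _ m1 l1; apply: (operator_matrix_inj psi_inj) => x.
rewrite (operator_matrix_commutator (Dm_d l1) (Dm_d m1)) dd ifF ?addr0.
  by rewrite (operator_matrixZ _ (Dm_d (_ : 1 <= m + l))) //; lia.
by apply/negbTE/eqP; lia.
Qed.

Lemma DmHm_comm m k : 1 <= m -> 0 <= k ->
  Hm k *m Dm m - Dm m *m Hm k = - hidx R k *: Hm (m + k).
Proof.
case: HD => _ _ dh _ _ m1 k0; apply: (operator_matrix_inj psi_inj) => x.
rewrite (operator_matrix_commutator (Hm_h k0) (Dm_d m1)) dh.
by rewrite (operator_matrixZ _ (Hm_h (_ : 0 <= m + k))) //; lia.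
Qed.

Lemma Hm_comm k l : 0 <= k -> 0 <= l -> Hm l *m Hm k - Hm k *m Hm l = 0.
Proof.
case: HD => _ _ _ hh _ k0 l0; apply: (operator_matrix_inj psi_inj) => x.
rewrite (operator_matrix_commutator (Hm_h l0) (Hm_h k0)) hh mulmx0 linear0 ifF //.
by apply/negbTE/eqP; lia.
Qed.
End DplusOperatorMatrices.

Lemma Dmodule_stable_line (R : realType) (M : lmodType R[i])
    (d h : int -> M -> M) (c1 c2 : M -> M) :
  is_Dmodule d h c1 c2 -> (exists x : M, x != 0) -> Dplus_locally_finite d h ->
  exists2 v : M, v != 0 & Dplus_stable_line d h v.
Proof.
move=> HD [u u0] /(_ u) [s [su [sd sh]]]; have [[ld lh _ _] _ _ _ _] := HD.
have [r [psi [psi_inj psi_onto]]] := span_seq_model s.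
have [Dm Dm_d] := operator_matrices psi_onto (fun m _ => ld m) sd.
have [Hm Hm_h] := operator_matrices psi_onto (fun k _ => lh k) sh.
have r0 : (0 < r)%N.
  have [x ux] := (psi_onto u).1 su.
  have /rV0Pn [i _] : x != 0 by apply: contraNneq u0 => x0; rewrite ux x0 linear0.
  exact: leq_ltn_trans (leq0n i) (ltn_ord i).
have [v v0 [vD vH]] := Dplus_matrix_common_eigenvector (Dm_comm HD psi_inj Dm_d)
  (DmHm_comm HD psi_inj Dm_d Hm_h) (Hm_comm HD psi_inj Hm_h) r0.
exists (psi v); first by apply: contraNneq v0; rewrite -(linear0 psi) => /psi_inj ->.
split=> [m m1|k k0].
  by have [a va] := vD m m1; exists a; rewrite -Dm_d // va linearZ.
by have [a va] := vH k k0; exists a; rewrite -Hm_h // va linearZ.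
Qed.

Lemma linear_funZ (K : pzRingType) (U V : lmodType K) (f : U -> V) :
  linear f -> forall a x, f (a *: x) = a *: f x.
Proof.
move=> lf; pose fL : {linear U -> V} := HB.pack f (GRing.isLinear.Build _ _ _ _ f lf).
exact: linearZZ fL.
Qed.

Section SimpleModules.
Variables (R : realType) (M : lmodType R[i]).
Variables (d h : int -> M -> M) (c1 c2 : M -> M).
Hypothesis HD : is_Dmodule d h c1 c2.

Lemma Dsimple_generated_by v : Dsimple d h c1 c2 -> v != 0 -> generated_by d h c1 c2 v.
Proof.
move=> [_ Msimple] v0 W WD Wv x; have [W0|//] := Msimple W WD.
by move: v0; rewrite (W0 v Wv) eqxx.
Qed.

Lemma stable_line_eigenvalues v : Dplus_stable_line d h v ->
  exists phid phih : int -> R[i],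
    (forall n, 1 <= n -> d n v = phid n *: v) /\ (forall k, 0 <= k -> h k v = phih k *: v).
Proof.
move=> [vd vh].
have [phid dv] : exists phid : int -> R[i], forall n, 1 <= n -> d n v = phid n *: v.
  apply: (choice (fun n a => 1 <= n -> d n v = a *: v)) => n.
  have [n1|_] := boolP (1 <= n); last by exists 0.
  by have [a va] := vd n n1; exists a.
have [phih hv] : exists phih : int -> R[i], forall k, 0 <= k -> h k v = phih k *: v.
  apply: (choice (fun k a => 0 <= k -> h k v = a *: v)) => k.
  have [k0|_] := boolP (0 <= k); last by exists 0.
  by have [a va] := vh k k0; exists a.
by exists phid, phih.
Qed.

Lemma eigenvalues_lie_hom v phid phih : v != 0 ->
  (forall n, 1 <= n -> d n v = phid n *: v) -> (forall k, 0 <= k -> h k v = phih k *: v) ->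
  Dplus_lie_hom phid phih.
Proof.
case: HD => [[ld lh _ _] dd dh _ _] v0 dv hv.
have scale_eq0 a : a *: v = 0 -> a = 0.
  by move/eqP; rewrite scaler_eq0 (negbTE v0) orbF => /eqP.
have dZ m a : d m (a *: v) = a *: d m v by exact: linear_funZ.
have hZ k a : h k (a *: v) = a *: h k v by exact: linear_funZ.
split=> [m n m1 n1|m k m1 k0]; apply: scale_eq0.
  have mn0 : (m + n == 0) = false by apply/negbTE/eqP; lia.
  have := dd m n v; rewrite (dv n n1) (dv m m1) dZ dZ (dv n n1) (dv m m1).
  rewrite mn0 addr0 (dv (m + n)); last lia.
  by rewrite !scalerA mulrC subrr => <-.
have := dh m k v; rewrite (hv k k0) (dv m m1) dZ hZ (dv m m1) (hv k k0).
rewrite (hv (m + k)); last lia.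
by rewrite !scalerA mulrC subrr => <-.
Qed.

Lemma stable_line_Whittaker v : v != 0 -> Dplus_stable_line d h v ->
  Dsimple d h c1 c2 -> is_Whittaker_module d h c1 c2.
Proof.
move=> v0 vline Msimple; have [phid [phih [dv hv]]] := stable_line_eigenvalues vline.
exists v; split; first exact: v0.
  exact: Dsimple_generated_by.
by exists phid, phih; split => //; exact: eigenvalues_lie_hom dv hv.
Qed.
End SimpleModules.

Theorem theorem6p3 (R : realType) (M : lmodType R[i])
    (d h : int -> M -> M) (c1 c2 : M -> M)
    (HD : is_Dmodule d h c1 c2)
    (Hnz : exists x : M, x != 0)
    (Hlf : Dplus_locally_finite d h) :
  (exists v : M, v != 0 /\ Dplus_stable_line d h v) /\
  (Dsimple d h c1 c2 ->
     is_Whittaker_module d h c1 c2 \/ is_highest_weight_module d h c1 c2).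
Proof.
have [v v0 vline] := Dmodule_stable_line HD Hnz Hlf.
split; first by exists v.
by move=> Msimple; left; apply: (stable_line_Whittaker HD v0 vline Msimple).
Qed.
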